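(* $R_4(VS)=58$: there is a 4-coloring of $[57]$ in which no two integers of the same color differ by a positive perfect square, and every 4-coloring of $[58]$ contains integers $a<b$ of the same color with $b-a$ a positive perfect square.
   Context: For $n\in\mathbb{N}$, $[n]=\{1,\dots,n\}$; a $c$-coloring of $[n]$ is a function $[n]\to[c]$. $R_c(VS)$ (the van der Square number) is the least positive integer $n$ such that every $c$-coloring of $[n]$ contains integers $a<b$ in $[n]$ of the same color with $b-a=x^2$ for some positive integer $x$. *)

From mathcomp Require Import all_boot.

(* A c-coloring of [n] = {1,...,n} is modelled as a function col : nat -> 'I_c;
   only its values on 1..n matter. *)

Definition mono_square_pair (c n : nat) (col : nat -> 'I_c) : Prop :=
  exists a b x : nat,
    [/\ 1 <= a < b, b <= n, 0 < x, b - a = x ^ 2 & col a = col b].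

Definition every_coloring_mono (c n : nat) : Prop :=
  forall col : nat -> 'I_c, @mono_square_pair c n col.

Definition is_van_der_square_number (c N : nat) : Prop :=
  [/\ 0 < N, every_coloring_mono c N &
      forall m, 0 < m -> m < N -> ~ every_coloring_mono c m].

(* Lower bound: an explicit coloring of [1..57], checked by computation.  Upper bound: after
   renaming colors, 1 and 2 get colors 0 and 1; every such coloring of [1..58] is then refuted
   by a case-split tree.  Each node keeps a list of possible colors per position and prunes it
   by forward propagation (a position with a single possible color removes that color from all
   positions a square away); a branch is closed when some position has no color left.  The
   tree, found by an external search, is checked by reflection. *)

From mathcomp Require Import all_boot fingroup perm zmodp zify.

Set Implicit Arguments.
Unset Strict Implicit.
Unset Printing Implicit Defensive.

Section DomainPropagation.

Variable diffs : seq nat.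
Hypothesis diffs_gt0 : 0 \notin diffs.

Lemma diff_gt0 d : d \in diffs -> 0 < d.
Proof. by move=> dd; rewrite lt0n; apply: contraTneq dd => ->. Qed.

Definition avoids n (f : nat -> nat) :=
  forall a b, a < b < n -> b - a \in diffs -> f a != f b.

Definition avoidsb n (f : nat -> nat) :=
  all (fun b => all (fun d => (d <= b) ==> (f (b - d) != f b)) diffs) (iota 0 n).

Lemma avoidsP n f : reflect (avoids n f) (avoidsb n f).
Proof.
apply: (iffP allP) => [ok a b /andP[ab bn] dab | ok b].
  have bI : b \in iota 0 n by rewrite mem_iota.
  by have /allP/(_ _ dab) := ok b bI; rewrite leq_subr subKn ?(ltnW ab).
rewrite mem_iota => /= bn; apply/allP=> d dd; apply/implyP=> db.
by apply: ok; rewrite ?subKn // bn andbT; have := diff_gt0 dd; lia.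
Qed.

Definition fits (f : nat -> nat) (D : seq (seq nat)) :=
  forall i, i < size D -> f i \in nth [::] D i.

Lemma fits_nilp f (D : seq (seq nat)) : has (@nilp nat) D -> ~ fits f D.
Proof.
move=> /(has_nthP [::])[i iD]; rewrite /nilp size_eq0 => /eqP Di /(_ i iD).
by rewrite Di.
Qed.

Fixpoint catw (s t : seq (seq nat)) :=
  match s, t with
  | a :: s', b :: t' => (a ++ b) :: catw s' t'
  | [::], _ => t
  | _, [::] => s
  end.

Lemma nth_catw s t i : nth [::] (catw s t) i = nth [::] s i ++ nth [::] t i.
Proof.
by elim: s t i => [|a s IH] [|b t] [|i] //=; rewrite ?cats0.
Qed.

Definition forced (D : seq (seq nat)) :=
  [seq if s is [:: c] then s else [::] | s <- D].

Lemma mem_forced D j c : c \in nth [::] (forced D) j -> nth [::] D j = [:: c].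
Proof.
have [jD|jD] := ltnP j (size D); last by rewrite nth_default ?size_map.
by rewrite (nth_map [::]) //; case: (nth _ D j) => [|a [|]] //; rewrite inE => /eqP->.
Qed.

(* Shifting the whole list [forced D] avoids a quadratic number of [nth] lookups. *)
Definition blocked D :=
  let F := forced D in
  foldr (fun d B => catw (catw (ncons d [::] F) (drop d F)) B) [::] diffs.

Lemma mem_blocked D i c : c \in nth [::] (blocked D) i ->
  exists2 d, d \in diffs &
    (d <= i /\ nth [::] D (i - d) = [:: c]) \/ nth [::] D (i + d) = [:: c].
Proof.
rewrite /blocked; elim: diffs => [|d ds IH] /=; first by case: i.
rewrite !nth_catw nth_ncons nth_drop !mem_cat => /orP[/orP[]|].
- case: ltnP => [_|di /mem_forced]; first by rewrite in_nil.
  by exists d; rewrite ?mem_head //; left.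
- by move/mem_forced; exists d; rewrite ?mem_head //; right; rewrite addnC.
- by case/IH=> d' d'ds; exists d'; rewrite // inE d'ds orbT.
Qed.

Definition pass D :=
  let B := blocked D in
  mkseq (fun i => [seq c <- nth [::] D i | c \notin nth [::] B i]) (size D).

Lemma size_pass D : size (pass D) = size D.
Proof. exact: size_mkseq. Qed.

Lemma fits_pass f D : avoids (size D) f -> fits f D -> fits f (pass D).
Proof.
move=> ok fD i; rewrite size_pass => iD.
rewrite nth_mkseq // mem_filter fD // andbT; apply/negP=> /mem_blocked[d dd].
have d_gt0 := diff_gt0 dd; case=> [[di Dj]|Dj].
- have jD : i - d < size D by lia.
  have /negP[] : f (i - d) != f i by apply: ok; rewrite ?subKn //; lia.
  by have := fD _ jD; rewrite Dj inE.
- have jD : i + d < size D by case: ltnP Dj => // ?; rewrite nth_default.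
  have /negP[] : f i != f (i + d) by apply: ok; rewrite ?addKn //; lia.
  by have := fD _ jD; rewrite Dj inE eq_sym.
Qed.

Fixpoint stabilize fuel D :=
  if fuel is k.+1 then (let D' := pass D in if D' == D then D else stabilize k D')
  else D.

(* Each productive pass deletes a candidate, so this fuel always reaches the fixpoint. *)
Definition propagate D := stabilize (sumn (map size D)) D.

Lemma propagate_sound f D : avoids (size D) f -> fits f D ->
  size (propagate D) = size D /\ fits f (propagate D).
Proof.
rewrite /propagate; move: (sumn _) => k; elim: k D => [|k IH] D ok fD; first by [].
rewrite /=; case: ifP => // _; rewrite -(size_pass D).
by apply: IH; rewrite ?size_pass //; exact: fits_pass.
Qed.

Definition restrict D v (P : pred nat) :=
  set_nth [::] D v [seq c <- nth [::] D v | P c].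

Lemma restrict_sound f D v (P : pred nat) : v < size D -> P (f v) -> fits f D ->
  size (restrict D v P) = size D /\ fits f (restrict D v P).
Proof.
move=> vD Pv fD; have sz : size (restrict D v P) = size D.
  by rewrite size_set_nth; apply/maxn_idPr.
split=> // i; rewrite sz nth_set_nth /= => iD.
by case: eqP => [->|_]; rewrite ?mem_filter ?Pv ?fD.
Qed.

Inductive tree := Leaf | Branch of nat & nat & tree & tree.

Fixpoint refutes t D :=
  let D' := propagate D in
  has (@nilp nat) D' ||
  if t is Branch v c t_eq t_neq then
    [&& v < size D', refutes t_eq (restrict D' v (pred1 c))
                   & refutes t_neq (restrict D' v (predC1 c))]
  else false.

Lemma refutes_sound t D f : refutes t D -> avoids (size D) f -> ~ fits f D.
Proof.
elim: t D => [|v c t_eq IHeq t_neq IHneq] D /= refD ok fD;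
  have [szD' fD'] := propagate_sound ok fD;
  case/orP: refD => [/fits_nilp/(_ fD') // | //].
case/and3P=> vD' ref_eq ref_neq.
rewrite -szD' in ok; have [fvc|fvc] := eqVneq (f v) c.
- have [sz fR] := restrict_sound (P := pred1 c) vD' (introT eqP fvc) fD'.
  by apply: IHeq ref_eq _ fR; rewrite sz.
- have [sz fR] := restrict_sound (P := predC1 c) vD' fvc fD'.
  by apply: IHneq ref_neq _ fR; rewrite sz.
Qed.

End DomainPropagation.

Definition squares k := [seq x ^ 2 | x <- iota 1 k].

Lemma squares_gt0 k : 0 \notin squares k.
Proof.
apply/mapP=> -[x]; rewrite mem_iota => /andP[x_gt0 _] sq.
by have := expn_gt0 x 2; rewrite x_gt0 -sq.
Qed.

Definition nat_coloring c (col : nat -> 'I_c) i : nat := col i.+1.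

Lemma mono_square_pair_widen c m n (col : nat -> 'I_c) : m <= n ->
  mono_square_pair c m col -> mono_square_pair c n col.
Proof.
by move=> mn [a [b [x [ab bm x_gt0 bax eq_col]]]]; exists a, b, x; split=> //; lia.
Qed.

Lemma mono_square_pair_relabel c n (g : 'I_c -> 'I_c) (col : nat -> 'I_c) :
  injective g -> mono_square_pair c n (g \o col) -> mono_square_pair c n col.
Proof.
by move=> g_inj [a [b [x [ab bn x_gt0 bax /g_inj eq_col]]]]; exists a, b, x.
Qed.

Lemma not_avoids_mono_square_pair c n k (col : nat -> 'I_c) :
  ~~ avoidsb (squares k) n (nat_coloring col) -> mono_square_pair c n col.
Proof.
case/allPn=> b; rewrite mem_iota /= => bn /allPn[_ /mapP[x x1k ->]].
rewrite mem_iota in x1k.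
rewrite /nat_coloring negb_imply negbK => /andP[xb /eqP/val_inj eq_col].
have x_gt0 : 0 < x ^ 2 by rewrite expn_gt0; case/andP: x1k => ->.
by exists (b - x ^ 2).+1, b.+1, x; split=> //; lia.
Qed.

Lemma avoids_no_mono_square_pair c n k (col : nat -> 'I_c) : n <= k.+1 ^ 2 ->
  avoids (squares k) n (nat_coloring col) -> ~ mono_square_pair c n col.
Proof.
move=> nk ok [a [b [x [/andP[a_gt0 ab] bn x_gt0 bax eq_col]]]].
have /negP[] : nat_coloring col a.-1 != nat_coloring col b.-1.
  apply: ok; first lia.
  have xk : x <= k by rewrite -ltnS -(ltn_exp2r _ _ (isT : 0 < 2)); lia.
  by apply/mapP; exists x; rewrite ?mem_iota; lia.
by rewrite /nat_coloring !prednK ?eq_col //; lia.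
Qed.

Lemma perm_map2 (T : finType) (x y a b : T) : x != y -> a != b ->
  exists p : {perm T}, p x = a /\ p y = b.
Proof.
move=> xy ab; pose p1 := tperm x a.
have p1x : p1 x = a by rewrite tpermL.
have p1y : p1 y != a by rewrite -p1x (inj_eq perm_inj) eq_sym.
by exists (p1 * tperm (p1 y) b)%g; rewrite !permM p1x tpermL tpermD // eq_sym.
Qed.

Definition case4 v t0 t1 t2 t3 := Branch v 0 t0 (Branch v 1 t1 (Branch v 2 t2 t3)).

Definition certificate58 : tree :=
  case4 16 Leaf (case4 25 Leaf Leaf (case4 26 (case4 41 (case4 32 Leaf Leaf (case4 36 Leaf (case4
  27 Leaf Leaf (case4 40 Leaf Leaf (case4 4 Leaf (case4 29 Leaf Leaf Leaf Leaf) Leaf (case4 29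
  Leaf Leaf Leaf Leaf)) (case4 4 Leaf (case4 29 (case4 7 Leaf Leaf Leaf (case4 18 Leaf Leaf Leaf
  Leaf)) Leaf Leaf Leaf) Leaf Leaf)) (case4 28 (case4 29 Leaf (case4 30 Leaf Leaf Leaf Leaf) Leaf
  Leaf) (case4 29 (case4 31 (case4 5 Leaf Leaf (case4 18 Leaf Leaf Leaf Leaf) Leaf) (case4 5 Leaf
  Leaf (case4 18 Leaf Leaf Leaf Leaf) Leaf) Leaf Leaf) Leaf Leaf Leaf) Leaf Leaf)) Leaf (case4 20
  (case4 27 Leaf Leaf (case4 29 Leaf Leaf Leaf (case4 30 Leaf Leaf Leaf Leaf)) Leaf) Leaf Leaf
  Leaf)) (case4 36 Leaf (case4 27 Leaf Leaf (case4 28 (case4 29 Leaf (case4 30 Leaf Leaf Leaf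
  Leaf) Leaf Leaf) (case4 29 (case4 31 (case4 5 Leaf Leaf (case4 18 Leaf Leaf Leaf Leaf) Leaf)
  (case4 5 Leaf Leaf (case4 18 Leaf Leaf Leaf Leaf) Leaf) Leaf Leaf) Leaf Leaf Leaf) Leaf Leaf)
  (case4 40 Leaf Leaf (case4 4 Leaf (case4 29 Leaf Leaf Leaf Leaf) Leaf (case4 29 Leaf Leaf Leaf
  Leaf)) (case4 4 Leaf (case4 29 (case4 7 Leaf Leaf (case4 18 Leaf Leaf Leaf Leaf) Leaf) Leaf Leaf
  Leaf) Leaf Leaf))) (case4 20 (case4 27 Leaf (case4 19 Leaf (case4 29 Leaf Leaf Leaf Leaf) Leaf
  Leaf) Leaf (case4 29 Leaf Leaf Leaf Leaf)) Leaf Leaf Leaf) Leaf)) Leaf Leaf (case4 32 (case4 37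
  (case4 21 Leaf (case4 30 Leaf Leaf (case4 31 Leaf Leaf Leaf Leaf) Leaf) Leaf Leaf) Leaf (case4
  28 Leaf (case4 27 Leaf Leaf (case4 29 (case4 20 Leaf Leaf Leaf Leaf) Leaf Leaf Leaf) (case4 29
  Leaf Leaf Leaf Leaf)) Leaf (case4 27 Leaf Leaf (case4 29 (case4 20 Leaf Leaf Leaf Leaf) Leaf
  Leaf Leaf) Leaf)) Leaf) Leaf (case4 36 Leaf (case4 27 Leaf Leaf (case4 40 (case4 5 (case4 21
  Leaf (case4 7 Leaf Leaf Leaf (case4 18 Leaf Leaf Leaf Leaf)) Leaf Leaf) Leaf (case4 30 Leaf Leaf
  Leaf Leaf) Leaf) Leaf (case4 4 Leaf (case4 29 (case4 18 Leaf Leaf Leaf Leaf) Leaf Leaf (case4 30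
  Leaf Leaf (case4 7 Leaf Leaf Leaf Leaf) Leaf)) Leaf (case4 29 Leaf (case4 30 Leaf Leaf (case4 7
  Leaf Leaf Leaf Leaf) Leaf) Leaf Leaf)) Leaf) (case4 28 (case4 29 Leaf (case4 30 Leaf Leaf Leaf
  Leaf) Leaf (case4 30 Leaf Leaf Leaf Leaf)) (case4 29 Leaf Leaf Leaf (case4 30 Leaf Leaf (case4
  40 Leaf Leaf (case4 7 Leaf Leaf Leaf (case4 6 Leaf Leaf Leaf Leaf)) Leaf) Leaf)) Leaf Leaf))
  Leaf (case4 20 (case4 21 Leaf (case4 27 Leaf Leaf (case4 29 Leaf Leaf Leaf Leaf) Leaf) Leaf
  Leaf) Leaf (case4 27 Leaf (case4 19 Leaf Leaf Leaf Leaf) (case4 4 Leaf (case4 7 (case4 8 Leaf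
  Leaf Leaf Leaf) Leaf Leaf Leaf) Leaf (case4 7 (case4 8 Leaf Leaf (case4 18 (case4 19 Leaf Leaf
  Leaf Leaf) Leaf Leaf Leaf) Leaf) Leaf Leaf Leaf)) Leaf) Leaf)) Leaf)) Leaf Leaf (case4 41 (case4
  32 Leaf Leaf (case4 36 Leaf (case4 27 (case4 28 Leaf (case4 29 (case4 30 Leaf Leaf Leaf Leaf)
  Leaf Leaf Leaf) Leaf (case4 29 (case4 30 Leaf Leaf Leaf Leaf) (case4 30 Leaf Leaf Leaf Leaf)
  Leaf Leaf)) Leaf (case4 40 Leaf Leaf (case4 4 Leaf (case4 29 Leaf Leaf Leaf Leaf) Leaf (case4 29
  Leaf Leaf Leaf Leaf)) (case4 4 Leaf (case4 29 (case4 30 Leaf Leaf Leaf Leaf) Leaf Leaf Leaf)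
  Leaf Leaf)) Leaf) Leaf (case4 20 (case4 29 Leaf Leaf Leaf (case4 38 Leaf Leaf Leaf Leaf)) Leaf
  Leaf Leaf)) (case4 36 Leaf (case4 27 (case4 28 Leaf (case4 29 (case4 30 Leaf Leaf Leaf Leaf)
  Leaf Leaf Leaf) Leaf Leaf) Leaf (case4 28 (case4 29 Leaf (case4 30 Leaf Leaf Leaf Leaf) Leaf
  Leaf) (case4 29 (case4 30 Leaf Leaf Leaf Leaf) Leaf Leaf Leaf) Leaf Leaf) Leaf) (case4 20 (case4
  27 Leaf (case4 29 Leaf Leaf Leaf Leaf) Leaf Leaf) Leaf Leaf Leaf) Leaf)) Leaf Leaf (case4 32
  (case4 37 (case4 21 Leaf (case4 30 (case4 29 Leaf Leaf Leaf Leaf) Leaf (case4 31 Leaf (case4 27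
  (case4 40 (case4 18 Leaf Leaf Leaf Leaf) Leaf (case4 6 Leaf Leaf Leaf (case4 18 Leaf Leaf Leaf
  Leaf)) Leaf) Leaf (case4 40 (case4 18 Leaf Leaf Leaf Leaf) Leaf (case4 6 Leaf Leaf Leaf (case4
  18 Leaf Leaf Leaf Leaf)) Leaf) Leaf) Leaf (case4 6 Leaf (case4 39 Leaf Leaf Leaf Leaf) (case4 8
  (case4 18 Leaf Leaf Leaf Leaf) Leaf Leaf Leaf) Leaf)) Leaf) Leaf (case4 20 (case4 29 Leaf Leaf
  Leaf (case4 19 Leaf Leaf Leaf (case4 27 (case4 18 Leaf Leaf Leaf Leaf) Leaf Leaf Leaf))) Leaf
  (case4 4 Leaf (case4 40 (case4 7 Leaf Leaf (case4 9 Leaf Leaf Leaf Leaf) Leaf) Leaf (case4 31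
  Leaf (case4 27 (case4 7 Leaf Leaf (case4 6 Leaf Leaf Leaf (case4 18 Leaf Leaf Leaf Leaf)) Leaf)
  Leaf (case4 7 Leaf Leaf (case4 6 Leaf Leaf Leaf Leaf) Leaf) Leaf) Leaf (case4 19 Leaf Leaf Leaf
  Leaf)) Leaf) Leaf (case4 7 Leaf Leaf (case4 9 Leaf Leaf Leaf (case4 18 Leaf Leaf Leaf Leaf))
  (case4 9 Leaf Leaf Leaf (case4 18 Leaf Leaf Leaf Leaf)))) Leaf)) Leaf (case4 28 Leaf (case4 27
  (case4 29 (case4 20 Leaf Leaf Leaf Leaf) Leaf Leaf Leaf) Leaf (case4 29 (case4 20 Leaf Leaf Leaf
  Leaf) Leaf Leaf Leaf) Leaf) Leaf (case4 29 (case4 20 Leaf Leaf Leaf Leaf) Leaf Leaf Leaf)) Leaf)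
  Leaf (case4 36 Leaf (case4 27 (case4 28 Leaf (case4 29 Leaf Leaf Leaf (case4 31 Leaf (case4 4
  Leaf (case4 7 (case4 6 Leaf Leaf Leaf (case4 18 Leaf Leaf Leaf Leaf)) Leaf Leaf Leaf) Leaf Leaf)
  Leaf (case4 4 Leaf (case4 7 (case4 6 Leaf (case4 8 Leaf Leaf Leaf Leaf) Leaf Leaf) Leaf Leaf
  Leaf) Leaf Leaf))) Leaf (case4 29 Leaf (case4 30 (case4 18 Leaf Leaf Leaf Leaf) Leaf (case4 40
  Leaf Leaf (case4 7 (case4 8 Leaf Leaf Leaf Leaf) Leaf Leaf Leaf) Leaf) Leaf) Leaf Leaf)) Leaf
  (case4 40 (case4 5 (case4 21 Leaf (case4 39 Leaf Leaf Leaf Leaf) Leaf (case4 7 (case4 18 Leaf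
  Leaf Leaf Leaf) Leaf Leaf Leaf)) Leaf (case4 30 (case4 29 Leaf (case4 18 Leaf Leaf Leaf Leaf)
  Leaf (case4 18 Leaf Leaf Leaf Leaf)) Leaf Leaf Leaf) Leaf) Leaf (case4 4 Leaf (case4 29 Leaf
  Leaf Leaf (case4 7 (case4 18 Leaf Leaf Leaf Leaf) Leaf Leaf Leaf)) Leaf (case4 29 Leaf (case4 30
  (case4 18 Leaf Leaf Leaf Leaf) Leaf (case4 7 (case4 18 Leaf Leaf Leaf Leaf) Leaf Leaf Leaf)
  Leaf) Leaf Leaf)) Leaf) Leaf) Leaf (case4 20 (case4 21 Leaf (case4 29 Leaf (case4 28 Leaf Leaf
  Leaf Leaf) Leaf (case4 28 (case4 38 Leaf Leaf Leaf Leaf) (case4 19 Leaf Leaf Leaf (case4 7 Leaf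
  Leaf Leaf (case4 9 Leaf Leaf Leaf Leaf))) Leaf Leaf)) Leaf (case4 29 Leaf (case4 28 Leaf Leaf
  Leaf Leaf) Leaf (case4 28 Leaf (case4 19 Leaf Leaf Leaf (case4 7 Leaf Leaf Leaf (case4 9 Leaf
  Leaf Leaf Leaf))) Leaf Leaf))) Leaf (case4 4 Leaf (case4 7 (case4 8 Leaf Leaf (case4 13 Leaf
  Leaf (case4 14 Leaf (case4 18 Leaf Leaf Leaf Leaf) Leaf (case4 19 Leaf Leaf Leaf Leaf)) Leaf)
  (case4 18 Leaf Leaf Leaf Leaf)) Leaf Leaf (case4 8 Leaf Leaf (case4 10 (case4 19 Leaf Leaf Leaf
  (case4 18 Leaf Leaf Leaf Leaf)) Leaf (case4 6 (case4 30 Leaf Leaf Leaf Leaf) (case4 12 Leaf Leaf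
  Leaf Leaf) Leaf Leaf) Leaf) Leaf)) Leaf (case4 7 (case4 8 Leaf (case4 18 (case4 19 Leaf Leaf
  Leaf Leaf) Leaf Leaf Leaf) (case4 13 Leaf Leaf (case4 14 Leaf (case4 18 Leaf Leaf Leaf Leaf)
  Leaf (case4 19 Leaf Leaf Leaf (case4 28 Leaf Leaf Leaf Leaf))) Leaf) Leaf) Leaf Leaf (case4 9
  Leaf Leaf Leaf (case4 18 Leaf Leaf Leaf Leaf)))) Leaf)) Leaf))) (case4 26 (case4 41 (case4 32
  Leaf Leaf (case4 36 Leaf (case4 27 Leaf Leaf (case4 40 Leaf Leaf (case4 4 Leaf (case4 29 (case4
  7 Leaf Leaf Leaf (case4 18 Leaf Leaf Leaf Leaf)) Leaf Leaf Leaf) Leaf Leaf) (case4 4 Leaf (case4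
  29 Leaf Leaf Leaf Leaf) (case4 29 Leaf Leaf Leaf Leaf) Leaf)) (case4 28 (case4 29 Leaf (case4 30
  Leaf Leaf Leaf Leaf) Leaf Leaf) (case4 29 (case4 31 (case4 5 Leaf Leaf Leaf (case4 18 Leaf Leaf
  Leaf Leaf)) (case4 5 Leaf Leaf Leaf (case4 18 Leaf Leaf Leaf Leaf)) Leaf Leaf) Leaf Leaf Leaf)
  Leaf Leaf)) Leaf (case4 20 (case4 27 Leaf (case4 19 Leaf (case4 29 Leaf Leaf Leaf Leaf) Leaf
  Leaf) (case4 29 Leaf Leaf Leaf Leaf) Leaf) Leaf Leaf Leaf)) (case4 36 Leaf (case4 27 Leaf Leaf
  (case4 28 (case4 29 Leaf (case4 30 Leaf Leaf Leaf Leaf) Leaf Leaf) (case4 29 (case4 31 (case4 5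
  Leaf Leaf Leaf (case4 18 Leaf Leaf Leaf Leaf)) (case4 5 Leaf Leaf Leaf (case4 18 Leaf Leaf Leaf
  Leaf)) Leaf Leaf) Leaf Leaf Leaf) Leaf Leaf) (case4 40 Leaf Leaf (case4 4 Leaf (case4 29 (case4
  7 Leaf Leaf (case4 18 Leaf Leaf Leaf Leaf) Leaf) Leaf Leaf Leaf) Leaf Leaf) (case4 4 Leaf (case4
  29 Leaf Leaf Leaf Leaf) (case4 29 Leaf Leaf Leaf Leaf) Leaf))) (case4 20 (case4 27 Leaf Leaf
  Leaf (case4 29 Leaf Leaf (case4 30 Leaf Leaf Leaf Leaf) Leaf)) Leaf Leaf Leaf) Leaf)) Leaf
  (case4 32 (case4 37 (case4 21 Leaf (case4 30 Leaf Leaf Leaf (case4 31 Leaf Leaf Leaf Leaf)) Leaf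
  Leaf) Leaf Leaf (case4 28 Leaf (case4 27 Leaf Leaf (case4 29 Leaf Leaf Leaf Leaf) (case4 29
  (case4 20 Leaf Leaf Leaf Leaf) Leaf Leaf Leaf)) (case4 27 Leaf Leaf Leaf (case4 29 (case4 20
  Leaf Leaf Leaf Leaf) Leaf Leaf Leaf)) Leaf)) Leaf Leaf (case4 36 Leaf (case4 27 Leaf Leaf (case4
  28 (case4 29 Leaf (case4 30 Leaf Leaf Leaf Leaf) (case4 30 Leaf Leaf Leaf Leaf) Leaf) (case4 29
  Leaf Leaf (case4 30 Leaf Leaf Leaf (case4 40 Leaf Leaf Leaf (case4 7 Leaf Leaf (case4 6 Leaf
  Leaf Leaf Leaf) Leaf))) Leaf) Leaf Leaf) (case4 40 (case4 5 (case4 21 Leaf (case4 7 Leaf Leaf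
  (case4 18 Leaf Leaf Leaf Leaf) Leaf) Leaf Leaf) Leaf Leaf (case4 30 Leaf Leaf Leaf Leaf)) Leaf
  Leaf (case4 4 Leaf (case4 29 (case4 18 Leaf Leaf Leaf Leaf) Leaf (case4 30 Leaf Leaf Leaf (case4
  7 Leaf Leaf Leaf Leaf)) Leaf) (case4 29 Leaf (case4 30 Leaf Leaf Leaf (case4 7 Leaf Leaf Leaf
  Leaf)) Leaf Leaf) Leaf))) (case4 20 (case4 21 Leaf (case4 27 Leaf Leaf Leaf (case4 29 Leaf Leaf
  Leaf Leaf)) Leaf Leaf) Leaf Leaf (case4 27 Leaf (case4 19 Leaf Leaf Leaf Leaf) Leaf (case4 4
  Leaf (case4 7 (case4 8 Leaf Leaf Leaf Leaf) Leaf Leaf Leaf) (case4 7 (case4 8 Leaf Leaf Leaf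
  (case4 18 (case4 19 Leaf Leaf Leaf Leaf) Leaf Leaf Leaf)) Leaf Leaf Leaf) Leaf))) Leaf)) Leaf)
  Leaf (case4 41 (case4 32 Leaf Leaf (case4 36 Leaf (case4 27 (case4 28 Leaf (case4 29 (case4 30
  Leaf Leaf Leaf Leaf) Leaf Leaf Leaf) Leaf Leaf) Leaf Leaf (case4 28 (case4 29 Leaf (case4 30
  Leaf Leaf Leaf Leaf) Leaf Leaf) (case4 29 (case4 30 Leaf Leaf Leaf Leaf) Leaf Leaf Leaf) Leaf
  Leaf)) Leaf (case4 20 (case4 27 Leaf (case4 29 Leaf Leaf Leaf Leaf) Leaf Leaf) Leaf Leaf Leaf))
  (case4 36 Leaf (case4 27 (case4 28 Leaf (case4 29 (case4 30 Leaf Leaf Leaf Leaf) Leaf Leaf Leaf)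
  (case4 29 (case4 30 Leaf Leaf Leaf Leaf) (case4 30 Leaf Leaf Leaf Leaf) Leaf Leaf) Leaf) Leaf
  Leaf (case4 40 Leaf Leaf (case4 4 Leaf (case4 29 (case4 30 Leaf Leaf Leaf Leaf) Leaf Leaf Leaf)
  Leaf Leaf) (case4 4 Leaf (case4 29 Leaf Leaf Leaf Leaf) (case4 29 Leaf Leaf Leaf Leaf) Leaf)))
  (case4 20 (case4 29 Leaf Leaf (case4 38 Leaf Leaf Leaf Leaf) Leaf) Leaf Leaf Leaf) Leaf)) Leaf
  (case4 32 (case4 37 (case4 21 Leaf (case4 30 (case4 29 Leaf Leaf Leaf Leaf) Leaf Leaf (case4 31
  Leaf (case4 27 (case4 40 (case4 18 Leaf Leaf Leaf Leaf) Leaf Leaf (case4 6 Leaf Leaf (case4 18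
  Leaf Leaf Leaf Leaf) Leaf)) Leaf Leaf (case4 40 (case4 18 Leaf Leaf Leaf Leaf) Leaf Leaf (case4
  6 Leaf Leaf (case4 18 Leaf Leaf Leaf Leaf) Leaf))) (case4 6 Leaf (case4 39 Leaf Leaf Leaf Leaf)
  Leaf (case4 8 (case4 18 Leaf Leaf Leaf Leaf) Leaf Leaf Leaf)) Leaf)) (case4 20 (case4 29 Leaf
  Leaf (case4 19 Leaf Leaf (case4 27 (case4 18 Leaf Leaf Leaf Leaf) Leaf Leaf Leaf) Leaf) Leaf)
  Leaf Leaf (case4 4 Leaf (case4 40 (case4 7 Leaf Leaf Leaf (case4 9 Leaf Leaf Leaf Leaf)) Leaf
  Leaf (case4 31 Leaf (case4 27 (case4 7 Leaf Leaf Leaf (case4 6 Leaf Leaf (case4 18 Leaf Leaf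
  Leaf Leaf) Leaf)) Leaf Leaf (case4 7 Leaf Leaf Leaf (case4 6 Leaf Leaf Leaf Leaf))) (case4 19
  Leaf Leaf Leaf Leaf) Leaf)) (case4 7 Leaf Leaf (case4 9 Leaf Leaf (case4 18 Leaf Leaf Leaf Leaf)
  Leaf) (case4 9 Leaf Leaf (case4 18 Leaf Leaf Leaf Leaf) Leaf)) Leaf)) Leaf) Leaf Leaf (case4 28
  Leaf (case4 27 (case4 29 (case4 20 Leaf Leaf Leaf Leaf) Leaf Leaf Leaf) Leaf Leaf (case4 29
  (case4 20 Leaf Leaf Leaf Leaf) Leaf Leaf Leaf)) (case4 29 (case4 20 Leaf Leaf Leaf Leaf) Leaf
  Leaf Leaf) Leaf)) Leaf Leaf (case4 36 Leaf (case4 27 (case4 28 Leaf (case4 29 Leaf Leaf (case4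
  31 Leaf (case4 4 Leaf (case4 7 (case4 6 Leaf Leaf (case4 18 Leaf Leaf Leaf Leaf) Leaf) Leaf Leaf
  Leaf) Leaf Leaf) (case4 4 Leaf (case4 7 (case4 6 Leaf (case4 8 Leaf Leaf Leaf Leaf) Leaf Leaf)
  Leaf Leaf Leaf) Leaf Leaf) Leaf) Leaf) (case4 29 Leaf (case4 30 (case4 18 Leaf Leaf Leaf Leaf)
  Leaf Leaf (case4 40 Leaf Leaf Leaf (case4 7 (case4 8 Leaf Leaf Leaf Leaf) Leaf Leaf Leaf))) Leaf
  Leaf) Leaf) Leaf Leaf (case4 40 (case4 5 (case4 21 Leaf (case4 39 Leaf Leaf Leaf Leaf) (case4 7
  (case4 18 Leaf Leaf Leaf Leaf) Leaf Leaf Leaf) Leaf) Leaf Leaf (case4 30 (case4 29 Leaf (case4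
  18 Leaf Leaf Leaf Leaf) (case4 18 Leaf Leaf Leaf Leaf) Leaf) Leaf Leaf Leaf)) Leaf Leaf (case4 4
  Leaf (case4 29 Leaf Leaf (case4 7 (case4 18 Leaf Leaf Leaf Leaf) Leaf Leaf Leaf) Leaf) (case4 29
  Leaf (case4 30 (case4 18 Leaf Leaf Leaf Leaf) Leaf Leaf (case4 7 (case4 18 Leaf Leaf Leaf Leaf)
  Leaf Leaf Leaf)) Leaf Leaf) Leaf))) (case4 20 (case4 21 Leaf (case4 29 Leaf (case4 28 Leaf Leaf
  Leaf Leaf) (case4 28 (case4 38 Leaf Leaf Leaf Leaf) (case4 19 Leaf Leaf (case4 7 Leaf Leaf
  (case4 9 Leaf Leaf Leaf Leaf) Leaf) Leaf) Leaf Leaf) Leaf) (case4 29 Leaf (case4 28 Leaf Leaf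
  Leaf Leaf) (case4 28 Leaf (case4 19 Leaf Leaf (case4 7 Leaf Leaf (case4 9 Leaf Leaf Leaf Leaf)
  Leaf) Leaf) Leaf Leaf) Leaf) Leaf) Leaf Leaf (case4 4 Leaf (case4 7 (case4 8 Leaf Leaf (case4 18
  Leaf Leaf Leaf Leaf) (case4 13 Leaf Leaf Leaf (case4 14 Leaf (case4 18 Leaf Leaf Leaf Leaf)
  (case4 19 Leaf Leaf Leaf Leaf) Leaf))) Leaf (case4 8 Leaf Leaf Leaf (case4 10 (case4 19 Leaf
  Leaf (case4 18 Leaf Leaf Leaf Leaf) Leaf) Leaf Leaf (case4 6 (case4 30 Leaf Leaf Leaf Leaf)
  (case4 12 Leaf Leaf Leaf Leaf) Leaf Leaf))) Leaf) (case4 7 (case4 8 Leaf (case4 18 (case4 19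
  Leaf Leaf Leaf Leaf) Leaf Leaf Leaf) Leaf (case4 13 Leaf Leaf Leaf (case4 14 Leaf (case4 18 Leaf
  Leaf Leaf Leaf) (case4 19 Leaf Leaf (case4 28 Leaf Leaf Leaf Leaf) Leaf) Leaf))) Leaf (case4 9
  Leaf Leaf (case4 18 Leaf Leaf Leaf Leaf) Leaf) Leaf) Leaf)) Leaf)) Leaf) Leaf)) (case4 17 (case4
  25 Leaf (case4 21 Leaf Leaf (case4 37 (case4 30 Leaf (case4 32 (case4 31 Leaf Leaf (case4 40
  (case4 39 Leaf Leaf Leaf Leaf) (case4 6 Leaf Leaf Leaf (case4 11 Leaf Leaf (case4 18 Leaf Leaf
  Leaf Leaf) (case4 13 Leaf Leaf Leaf Leaf))) Leaf Leaf) (case4 6 Leaf Leaf (case4 38 Leaf Leaf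
  Leaf Leaf) Leaf)) (case4 28 Leaf Leaf (case4 7 (case4 10 (case4 19 Leaf (case4 18 Leaf Leaf Leaf
  Leaf) Leaf Leaf) Leaf Leaf Leaf) Leaf Leaf (case4 6 Leaf Leaf (case4 38 Leaf Leaf Leaf Leaf)
  Leaf)) (case4 7 (case4 19 Leaf (case4 18 Leaf Leaf Leaf Leaf) Leaf Leaf) Leaf Leaf Leaf)) Leaf
  Leaf) Leaf Leaf) Leaf Leaf (case4 18 Leaf (case4 30 Leaf (case4 19 (case4 28 Leaf Leaf Leaf
  Leaf) Leaf (case4 27 Leaf Leaf Leaf (case4 31 Leaf Leaf (case4 39 Leaf Leaf Leaf Leaf) Leaf))
  Leaf) Leaf Leaf) Leaf (case4 38 Leaf Leaf Leaf Leaf))) (case4 20 (case4 29 Leaf Leaf (case4 30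
  Leaf (case4 37 Leaf Leaf (case4 9 Leaf Leaf Leaf Leaf) Leaf) Leaf Leaf) (case4 37 Leaf Leaf
  (case4 28 Leaf Leaf Leaf Leaf) Leaf)) (case4 36 Leaf Leaf (case4 28 Leaf Leaf Leaf Leaf) (case4
  32 (case4 4 Leaf Leaf (case4 30 Leaf (case4 31 Leaf Leaf (case4 27 Leaf Leaf Leaf Leaf) (case4 6
  Leaf Leaf (case4 8 Leaf Leaf Leaf Leaf) Leaf)) (case4 31 Leaf Leaf Leaf (case4 6 Leaf Leaf Leaf
  Leaf)) Leaf) (case4 7 Leaf Leaf Leaf (case4 9 Leaf Leaf Leaf (case4 18 Leaf (case4 27 Leaf Leaf
  Leaf Leaf) Leaf Leaf)))) (case4 4 Leaf Leaf (case4 30 Leaf (case4 7 (case4 27 Leaf (case4 18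
  Leaf Leaf Leaf Leaf) Leaf Leaf) Leaf Leaf Leaf) (case4 31 Leaf Leaf Leaf (case4 6 Leaf Leaf Leaf
  Leaf)) Leaf) (case4 7 (case4 27 Leaf (case4 18 Leaf Leaf (case4 30 Leaf Leaf Leaf Leaf) Leaf)
  Leaf Leaf) Leaf Leaf (case4 9 Leaf Leaf Leaf (case4 18 Leaf (case4 27 Leaf Leaf Leaf Leaf) Leaf
  Leaf)))) Leaf Leaf)) Leaf Leaf)) Leaf (case4 21 Leaf (case4 20 (case4 29 Leaf (case4 41 (case4
  32 Leaf (case4 7 (case4 9 Leaf Leaf Leaf Leaf) Leaf Leaf (case4 8 Leaf Leaf Leaf Leaf)) Leaf
  Leaf) Leaf Leaf Leaf) (case4 41 (case4 32 Leaf Leaf Leaf Leaf) Leaf Leaf Leaf) Leaf) Leaf Leaf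
  (case4 30 (case4 36 Leaf (case4 27 (case4 32 (case4 39 Leaf Leaf Leaf Leaf) Leaf Leaf (case4 28
  Leaf Leaf Leaf Leaf)) Leaf Leaf (case4 18 Leaf Leaf Leaf Leaf)) (case4 41 Leaf (case4 39 Leaf
  (case4 38 Leaf Leaf Leaf Leaf) (case4 38 Leaf Leaf Leaf Leaf) Leaf) Leaf Leaf) Leaf) Leaf Leaf
  (case4 36 Leaf (case4 27 (case4 31 Leaf (case4 41 Leaf (case4 4 Leaf (case4 28 Leaf (case4 19
  Leaf Leaf Leaf Leaf) Leaf Leaf) (case4 28 Leaf Leaf (case4 19 Leaf Leaf Leaf Leaf) Leaf) Leaf)
  Leaf Leaf) (case4 40 (case4 39 Leaf Leaf Leaf Leaf) Leaf Leaf (case4 6 Leaf (case4 19 Leaf Leaf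
  Leaf Leaf) Leaf Leaf)) Leaf) Leaf Leaf (case4 18 Leaf Leaf Leaf Leaf)) (case4 41 Leaf (case4 19
  Leaf (case4 18 Leaf Leaf Leaf (case4 39 Leaf Leaf Leaf Leaf)) (case4 18 Leaf Leaf Leaf (case4 39
  Leaf Leaf Leaf Leaf)) Leaf) Leaf Leaf) Leaf))) (case4 37 (case4 32 (case4 38 Leaf (case4 29
  (case4 31 Leaf Leaf (case4 39 Leaf Leaf Leaf Leaf) Leaf) Leaf Leaf Leaf) (case4 29 (case4 31
  Leaf Leaf (case4 39 Leaf Leaf Leaf Leaf) Leaf) Leaf Leaf Leaf) Leaf) Leaf Leaf (case4 28 Leaf
  (case4 27 (case4 29 (case4 6 Leaf (case4 19 Leaf Leaf Leaf Leaf) (case4 19 Leaf Leaf Leaf Leaf)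
  Leaf) Leaf Leaf Leaf) Leaf Leaf (case4 18 Leaf Leaf Leaf Leaf)) (case4 29 (case4 6 Leaf (case4
  14 Leaf Leaf Leaf Leaf) (case4 19 Leaf (case4 39 Leaf Leaf Leaf Leaf) Leaf Leaf) Leaf) Leaf Leaf
  Leaf) Leaf)) Leaf Leaf (case4 36 Leaf (case4 27 (case4 28 Leaf (case4 19 Leaf Leaf Leaf Leaf)
  (case4 29 Leaf Leaf Leaf Leaf) Leaf) Leaf Leaf (case4 18 Leaf Leaf (case4 8 Leaf Leaf Leaf Leaf)
  Leaf)) (case4 5 (case4 40 (case4 6 Leaf (case4 7 (case4 14 Leaf Leaf Leaf Leaf) Leaf Leaf (case4
  28 Leaf Leaf Leaf Leaf)) (case4 31 Leaf (case4 39 Leaf (case4 18 Leaf Leaf Leaf Leaf) (case4 18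
  Leaf Leaf Leaf Leaf) Leaf) Leaf Leaf) Leaf) Leaf Leaf (case4 6 Leaf (case4 7 (case4 23 Leaf Leaf
  Leaf Leaf) Leaf Leaf (case4 23 Leaf Leaf Leaf Leaf)) (case4 31 Leaf (case4 11 Leaf (case4 28
  Leaf Leaf Leaf Leaf) Leaf Leaf) Leaf Leaf) Leaf)) Leaf Leaf (case4 4 Leaf (case4 28 Leaf (case4
  40 Leaf Leaf Leaf Leaf) Leaf Leaf) (case4 28 Leaf Leaf (case4 8 Leaf Leaf Leaf Leaf) Leaf)
  Leaf)) Leaf)) Leaf)) Leaf Leaf (case4 25 Leaf (case4 21 (case4 20 Leaf (case4 36 Leaf Leaf Leaf
  (case4 32 (case4 28 Leaf (case4 30 Leaf (case4 31 Leaf Leaf Leaf (case4 39 Leaf Leaf Leaf Leaf))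
  Leaf (case4 31 Leaf (case4 39 Leaf Leaf Leaf Leaf) Leaf Leaf)) Leaf (case4 19 Leaf Leaf Leaf
  Leaf)) (case4 28 (case4 19 Leaf Leaf Leaf Leaf) Leaf Leaf Leaf) Leaf Leaf)) Leaf (case4 29
  (case4 36 Leaf (case4 32 (case4 27 Leaf Leaf Leaf Leaf) Leaf Leaf (case4 28 Leaf Leaf Leaf
  Leaf)) Leaf Leaf) Leaf (case4 30 Leaf (case4 36 Leaf (case4 27 Leaf Leaf Leaf Leaf) Leaf Leaf)
  Leaf (case4 36 Leaf (case4 27 Leaf Leaf Leaf Leaf) Leaf Leaf)) Leaf)) Leaf (case4 37 (case4 30
  Leaf (case4 32 (case4 31 Leaf Leaf (case4 40 (case4 39 Leaf Leaf Leaf Leaf) (case4 6 Leaf (case4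
  27 Leaf Leaf Leaf Leaf) Leaf Leaf) Leaf Leaf) (case4 6 Leaf (case4 18 Leaf Leaf Leaf Leaf) Leaf
  Leaf)) Leaf Leaf Leaf) Leaf (case4 29 (case4 32 (case4 31 Leaf (case4 40 Leaf Leaf (case4 39
  Leaf Leaf Leaf Leaf) Leaf) (case4 40 Leaf (case4 27 Leaf Leaf Leaf Leaf) Leaf Leaf) Leaf) Leaf
  Leaf Leaf) Leaf (case4 31 Leaf (case4 38 Leaf Leaf Leaf Leaf) (case4 38 Leaf Leaf Leaf (case4 19
  Leaf Leaf Leaf Leaf)) Leaf) Leaf)) Leaf Leaf (case4 18 Leaf (case4 30 Leaf (case4 19 (case4 28
  Leaf Leaf (case4 27 Leaf Leaf Leaf (case4 31 (case4 4 Leaf Leaf (case4 24 Leaf Leaf Leaf Leaf)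
  Leaf) Leaf Leaf Leaf)) Leaf) Leaf (case4 28 Leaf Leaf Leaf Leaf) Leaf) Leaf Leaf) Leaf Leaf))
  Leaf) Leaf (case4 41 (case4 32 Leaf (case4 36 Leaf Leaf (case4 28 (case4 27 Leaf (case4 18 Leaf
  Leaf Leaf Leaf) Leaf Leaf) Leaf (case4 29 Leaf Leaf Leaf Leaf) Leaf) Leaf) Leaf (case4 36 Leaf
  (case4 20 (case4 29 Leaf (case4 28 (case4 27 Leaf Leaf Leaf (case4 38 Leaf Leaf Leaf Leaf)) Leaf
  Leaf Leaf) Leaf Leaf) Leaf Leaf (case4 19 (case4 27 Leaf Leaf Leaf Leaf) (case4 27 Leaf Leaf
  Leaf Leaf) Leaf Leaf)) (case4 40 Leaf Leaf Leaf (case4 4 Leaf Leaf Leaf Leaf)) Leaf)) (case4 32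
  (case4 7 Leaf (case4 8 (case4 12 Leaf (case4 28 Leaf Leaf (case4 19 Leaf Leaf Leaf Leaf) (case4
  13 (case4 21 Leaf Leaf (case4 18 (case4 31 Leaf Leaf Leaf Leaf) Leaf Leaf Leaf) Leaf) Leaf
  (case4 18 Leaf Leaf (case4 19 (case4 20 Leaf Leaf Leaf Leaf) Leaf Leaf Leaf) Leaf) Leaf)) Leaf
  (case4 28 Leaf (case4 19 Leaf Leaf (case4 18 Leaf Leaf Leaf Leaf) Leaf) Leaf Leaf)) Leaf (case4
  18 (case4 20 Leaf Leaf Leaf (case4 19 Leaf Leaf (case4 11 (case4 6 Leaf Leaf Leaf Leaf) Leaf
  Leaf Leaf) Leaf)) Leaf Leaf Leaf) Leaf) Leaf (case4 9 Leaf (case4 18 (case4 27 Leaf Leaf Leaf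
  Leaf) Leaf (case4 27 Leaf Leaf Leaf (case4 28 Leaf (case4 29 (case4 20 Leaf Leaf Leaf Leaf) Leaf
  (case4 30 Leaf Leaf Leaf Leaf) Leaf) (case4 29 Leaf Leaf Leaf Leaf) Leaf)) Leaf) (case4 18
  (case4 29 Leaf (case4 20 Leaf Leaf Leaf (case4 19 Leaf Leaf Leaf Leaf)) Leaf Leaf) (case4 30
  Leaf Leaf Leaf Leaf) Leaf Leaf) Leaf)) Leaf Leaf (case4 36 Leaf (case4 20 (case4 29 Leaf (case4
  28 (case4 27 Leaf Leaf Leaf (case4 38 Leaf Leaf Leaf Leaf)) Leaf (case4 19 Leaf (case4 18 Leaf
  Leaf Leaf Leaf) Leaf (case4 27 Leaf Leaf Leaf Leaf)) Leaf) (case4 28 (case4 27 Leaf Leaf Leaf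
  (case4 38 Leaf Leaf Leaf Leaf)) Leaf Leaf Leaf) Leaf) Leaf Leaf (case4 4 Leaf (case4 7 (case4 18
  Leaf Leaf Leaf Leaf) (case4 9 Leaf (case4 18 Leaf Leaf Leaf Leaf) Leaf Leaf) Leaf Leaf) (case4 7
  (case4 18 Leaf Leaf Leaf Leaf) (case4 19 Leaf Leaf Leaf Leaf) Leaf Leaf) Leaf)) (case4 40 (case4
  31 Leaf (case4 27 (case4 28 Leaf Leaf Leaf Leaf) Leaf Leaf (case4 6 Leaf Leaf (case4 30 (case4
  29 Leaf Leaf Leaf Leaf) Leaf Leaf (case4 19 Leaf Leaf Leaf Leaf)) Leaf)) (case4 7 (case4 6 Leaf
  (case4 8 Leaf Leaf Leaf Leaf) Leaf Leaf) (case4 6 (case4 30 Leaf Leaf Leaf (case4 18 Leaf Leaf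
  Leaf Leaf)) Leaf Leaf Leaf) Leaf Leaf) Leaf) Leaf Leaf (case4 4 Leaf (case4 29 Leaf Leaf (case4
  28 Leaf Leaf Leaf Leaf) Leaf) (case4 29 Leaf (case4 28 Leaf Leaf (case4 38 Leaf Leaf Leaf Leaf)
  Leaf) Leaf Leaf) Leaf)) Leaf)) Leaf Leaf))) (case4 17 (case4 25 Leaf (case4 21 Leaf Leaf (case4
  20 (case4 29 Leaf Leaf (case4 37 Leaf Leaf Leaf (case4 28 Leaf Leaf Leaf Leaf)) (case4 30 Leaf
  (case4 37 Leaf Leaf Leaf (case4 9 Leaf Leaf Leaf Leaf)) Leaf Leaf)) (case4 36 Leaf Leaf (case4
  32 (case4 4 Leaf Leaf (case4 7 Leaf Leaf (case4 9 Leaf Leaf (case4 18 Leaf (case4 27 Leaf Leaf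
  Leaf Leaf) Leaf Leaf) Leaf) Leaf) (case4 30 Leaf (case4 31 Leaf Leaf (case4 6 Leaf Leaf Leaf
  (case4 8 Leaf Leaf Leaf Leaf)) (case4 27 Leaf Leaf Leaf Leaf)) Leaf (case4 31 Leaf Leaf (case4 6
  Leaf Leaf Leaf Leaf) Leaf))) (case4 4 Leaf Leaf (case4 7 (case4 27 Leaf (case4 18 Leaf Leaf Leaf
  (case4 30 Leaf Leaf Leaf Leaf)) Leaf Leaf) Leaf (case4 9 Leaf Leaf (case4 18 Leaf (case4 27 Leaf
  Leaf Leaf Leaf) Leaf Leaf) Leaf) Leaf) (case4 30 Leaf (case4 7 (case4 27 Leaf (case4 18 Leaf
  Leaf Leaf Leaf) Leaf Leaf) Leaf Leaf Leaf) Leaf (case4 31 Leaf Leaf (case4 6 Leaf Leaf Leaf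
  Leaf) Leaf))) Leaf Leaf) (case4 28 Leaf Leaf Leaf Leaf)) Leaf Leaf) (case4 37 (case4 30 Leaf
  (case4 32 (case4 31 Leaf Leaf (case4 6 Leaf Leaf Leaf (case4 38 Leaf Leaf Leaf Leaf)) (case4 40
  (case4 39 Leaf Leaf Leaf Leaf) (case4 6 Leaf Leaf (case4 11 Leaf Leaf (case4 13 Leaf Leaf Leaf
  Leaf) (case4 18 Leaf Leaf Leaf Leaf)) Leaf) Leaf Leaf)) (case4 28 Leaf Leaf (case4 7 (case4 19
  Leaf (case4 18 Leaf Leaf Leaf Leaf) Leaf Leaf) Leaf Leaf Leaf) (case4 7 (case4 10 (case4 19 Leaf
  (case4 18 Leaf Leaf Leaf Leaf) Leaf Leaf) Leaf Leaf Leaf) Leaf (case4 6 Leaf Leaf Leaf (case4 38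
  Leaf Leaf Leaf Leaf)) Leaf)) Leaf Leaf) Leaf Leaf) Leaf (case4 18 Leaf (case4 30 Leaf (case4 19
  (case4 28 Leaf Leaf Leaf Leaf) Leaf Leaf (case4 27 Leaf Leaf (case4 31 Leaf Leaf Leaf (case4 39
  Leaf Leaf Leaf Leaf)) Leaf)) Leaf Leaf) (case4 38 Leaf Leaf Leaf Leaf) Leaf) Leaf)) (case4 21
  Leaf (case4 20 (case4 29 Leaf (case4 41 (case4 32 Leaf (case4 7 (case4 9 Leaf Leaf Leaf Leaf)
  Leaf (case4 8 Leaf Leaf Leaf Leaf) Leaf) Leaf Leaf) Leaf Leaf Leaf) Leaf (case4 41 (case4 32
  Leaf Leaf Leaf Leaf) Leaf Leaf Leaf)) Leaf (case4 30 (case4 36 Leaf (case4 27 (case4 32 (case4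
  39 Leaf Leaf Leaf Leaf) Leaf (case4 28 Leaf Leaf Leaf Leaf) Leaf) Leaf (case4 18 Leaf Leaf Leaf
  Leaf) Leaf) Leaf (case4 41 Leaf (case4 39 Leaf (case4 38 Leaf Leaf Leaf Leaf) Leaf (case4 38
  Leaf Leaf Leaf Leaf)) Leaf Leaf)) Leaf (case4 36 Leaf (case4 27 (case4 31 Leaf (case4 41 Leaf
  (case4 4 Leaf (case4 28 Leaf (case4 19 Leaf Leaf Leaf Leaf) Leaf Leaf) Leaf (case4 28 Leaf Leaf
  Leaf (case4 19 Leaf Leaf Leaf Leaf))) Leaf Leaf) Leaf (case4 40 (case4 39 Leaf Leaf Leaf Leaf)
  Leaf (case4 6 Leaf (case4 19 Leaf Leaf Leaf Leaf) Leaf Leaf) Leaf)) Leaf (case4 18 Leaf Leaf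
  Leaf Leaf) Leaf) Leaf (case4 41 Leaf (case4 19 Leaf (case4 18 Leaf Leaf (case4 39 Leaf Leaf Leaf
  Leaf) Leaf) Leaf (case4 18 Leaf Leaf (case4 39 Leaf Leaf Leaf Leaf) Leaf)) Leaf Leaf)) Leaf)
  Leaf) Leaf (case4 37 (case4 32 (case4 38 Leaf (case4 29 (case4 31 Leaf Leaf Leaf (case4 39 Leaf
  Leaf Leaf Leaf)) Leaf Leaf Leaf) Leaf (case4 29 (case4 31 Leaf Leaf Leaf (case4 39 Leaf Leaf
  Leaf Leaf)) Leaf Leaf Leaf)) Leaf (case4 28 Leaf (case4 27 (case4 29 (case4 6 Leaf (case4 19
  Leaf Leaf Leaf Leaf) Leaf (case4 19 Leaf Leaf Leaf Leaf)) Leaf Leaf Leaf) Leaf (case4 18 Leaf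
  Leaf Leaf Leaf) Leaf) Leaf (case4 29 (case4 6 Leaf (case4 14 Leaf Leaf Leaf Leaf) Leaf (case4 19
  Leaf (case4 39 Leaf Leaf Leaf Leaf) Leaf Leaf)) Leaf Leaf Leaf)) Leaf) Leaf (case4 36 Leaf
  (case4 27 (case4 28 Leaf (case4 19 Leaf Leaf Leaf Leaf) Leaf (case4 29 Leaf Leaf Leaf Leaf))
  Leaf (case4 18 Leaf Leaf Leaf (case4 8 Leaf Leaf Leaf Leaf)) Leaf) Leaf (case4 5 (case4 40
  (case4 6 Leaf (case4 7 (case4 14 Leaf Leaf Leaf Leaf) Leaf (case4 28 Leaf Leaf Leaf Leaf) Leaf)
  Leaf (case4 31 Leaf (case4 39 Leaf (case4 18 Leaf Leaf Leaf Leaf) Leaf (case4 18 Leaf Leaf Leaf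
  Leaf)) Leaf Leaf)) Leaf (case4 6 Leaf (case4 7 (case4 23 Leaf Leaf Leaf Leaf) Leaf (case4 23
  Leaf Leaf Leaf Leaf) Leaf) Leaf (case4 31 Leaf (case4 11 Leaf (case4 28 Leaf Leaf Leaf Leaf)
  Leaf Leaf) Leaf Leaf)) Leaf) Leaf (case4 4 Leaf (case4 28 Leaf (case4 40 Leaf Leaf Leaf Leaf)
  Leaf Leaf) Leaf (case4 28 Leaf Leaf Leaf (case4 8 Leaf Leaf Leaf Leaf))) Leaf)) Leaf)) Leaf)
  Leaf (case4 25 Leaf (case4 21 (case4 20 Leaf (case4 36 Leaf Leaf (case4 32 (case4 28 Leaf (case4
  30 Leaf (case4 31 Leaf Leaf (case4 39 Leaf Leaf Leaf Leaf) Leaf) (case4 31 Leaf (case4 39 Leaf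
  Leaf Leaf Leaf) Leaf Leaf) Leaf) (case4 19 Leaf Leaf Leaf Leaf) Leaf) (case4 28 (case4 19 Leaf
  Leaf Leaf Leaf) Leaf Leaf Leaf) Leaf Leaf) Leaf) (case4 29 (case4 36 Leaf (case4 32 (case4 27
  Leaf Leaf Leaf Leaf) Leaf (case4 28 Leaf Leaf Leaf Leaf) Leaf) Leaf Leaf) Leaf Leaf (case4 30
  Leaf (case4 36 Leaf (case4 27 Leaf Leaf Leaf Leaf) Leaf Leaf) (case4 36 Leaf (case4 27 Leaf Leaf
  Leaf Leaf) Leaf Leaf) Leaf)) Leaf) Leaf Leaf (case4 37 (case4 30 Leaf (case4 32 (case4 31 Leaf
  Leaf (case4 6 Leaf (case4 18 Leaf Leaf Leaf Leaf) Leaf Leaf) (case4 40 (case4 39 Leaf Leaf Leaf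
  Leaf) (case4 6 Leaf (case4 27 Leaf Leaf Leaf Leaf) Leaf Leaf) Leaf Leaf)) Leaf Leaf Leaf) (case4
  29 (case4 32 (case4 31 Leaf (case4 40 Leaf Leaf Leaf (case4 39 Leaf Leaf Leaf Leaf)) Leaf (case4
  40 Leaf (case4 27 Leaf Leaf Leaf Leaf) Leaf Leaf)) Leaf Leaf Leaf) Leaf Leaf (case4 31 Leaf
  (case4 38 Leaf Leaf Leaf Leaf) Leaf (case4 38 Leaf Leaf (case4 19 Leaf Leaf Leaf Leaf) Leaf)))
  Leaf) Leaf (case4 18 Leaf (case4 30 Leaf (case4 19 (case4 28 Leaf Leaf Leaf (case4 27 Leaf Leaf
  (case4 31 (case4 4 Leaf Leaf Leaf (case4 24 Leaf Leaf Leaf Leaf)) Leaf Leaf Leaf) Leaf)) Leaf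
  Leaf (case4 28 Leaf Leaf Leaf Leaf)) Leaf Leaf) Leaf Leaf) Leaf)) (case4 41 (case4 32 Leaf
  (case4 36 Leaf Leaf Leaf (case4 28 (case4 27 Leaf (case4 18 Leaf Leaf Leaf Leaf) Leaf Leaf) Leaf
  Leaf (case4 29 Leaf Leaf Leaf Leaf))) (case4 36 Leaf (case4 20 (case4 29 Leaf (case4 28 (case4
  27 Leaf Leaf (case4 38 Leaf Leaf Leaf Leaf) Leaf) Leaf Leaf Leaf) Leaf Leaf) Leaf (case4 19
  (case4 27 Leaf Leaf Leaf Leaf) (case4 27 Leaf Leaf Leaf Leaf) Leaf Leaf) Leaf) Leaf (case4 40
  Leaf Leaf (case4 4 Leaf Leaf Leaf Leaf) Leaf)) Leaf) (case4 32 (case4 7 Leaf (case4 8 (case4 12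
  Leaf (case4 28 Leaf Leaf (case4 13 (case4 21 Leaf Leaf Leaf (case4 18 (case4 31 Leaf Leaf Leaf
  Leaf) Leaf Leaf Leaf)) Leaf Leaf (case4 18 Leaf Leaf Leaf (case4 19 (case4 20 Leaf Leaf Leaf
  Leaf) Leaf Leaf Leaf))) (case4 19 Leaf Leaf Leaf Leaf)) (case4 28 Leaf (case4 19 Leaf Leaf Leaf
  (case4 18 Leaf Leaf Leaf Leaf)) Leaf Leaf) Leaf) Leaf Leaf (case4 18 (case4 20 Leaf Leaf (case4
  19 Leaf Leaf Leaf (case4 11 (case4 6 Leaf Leaf Leaf Leaf) Leaf Leaf Leaf)) Leaf) Leaf Leaf
  Leaf)) (case4 9 Leaf (case4 18 (case4 27 Leaf Leaf Leaf Leaf) Leaf Leaf (case4 27 Leaf Leaf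
  (case4 28 Leaf (case4 29 (case4 20 Leaf Leaf Leaf Leaf) Leaf Leaf (case4 30 Leaf Leaf Leaf
  Leaf)) Leaf (case4 29 Leaf Leaf Leaf Leaf)) Leaf)) Leaf (case4 18 (case4 29 Leaf (case4 20 Leaf
  Leaf (case4 19 Leaf Leaf Leaf Leaf) Leaf) Leaf Leaf) (case4 30 Leaf Leaf Leaf Leaf) Leaf Leaf))
  Leaf) Leaf (case4 36 Leaf (case4 20 (case4 29 Leaf (case4 28 (case4 27 Leaf Leaf (case4 38 Leaf
  Leaf Leaf Leaf) Leaf) Leaf Leaf (case4 19 Leaf (case4 18 Leaf Leaf Leaf Leaf) (case4 27 Leaf
  Leaf Leaf Leaf) Leaf)) Leaf (case4 28 (case4 27 Leaf Leaf (case4 38 Leaf Leaf Leaf Leaf) Leaf)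
  Leaf Leaf Leaf)) Leaf (case4 4 Leaf (case4 7 (case4 18 Leaf Leaf Leaf Leaf) (case4 9 Leaf (case4
  18 Leaf Leaf Leaf Leaf) Leaf Leaf) Leaf Leaf) Leaf (case4 7 (case4 18 Leaf Leaf Leaf Leaf)
  (case4 19 Leaf Leaf Leaf Leaf) Leaf Leaf)) Leaf) Leaf (case4 40 (case4 31 Leaf (case4 27 (case4
  28 Leaf Leaf Leaf Leaf) Leaf (case4 6 Leaf Leaf Leaf (case4 30 (case4 29 Leaf Leaf Leaf Leaf)
  Leaf (case4 19 Leaf Leaf Leaf Leaf) Leaf)) Leaf) Leaf (case4 7 (case4 6 Leaf (case4 8 Leaf Leaf
  Leaf Leaf) Leaf Leaf) (case4 6 (case4 30 Leaf Leaf (case4 18 Leaf Leaf Leaf Leaf) Leaf) Leaf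
  Leaf Leaf) Leaf Leaf)) Leaf (case4 4 Leaf (case4 29 Leaf Leaf Leaf (case4 28 Leaf Leaf Leaf
  Leaf)) Leaf (case4 29 Leaf (case4 28 Leaf Leaf Leaf (case4 38 Leaf Leaf Leaf Leaf)) Leaf Leaf))
  Leaf)) Leaf) Leaf Leaf) Leaf) Leaf).

(* Positions 0 and 1 differ by 1, so their colors may be normalised to 0 and 1. *)
Definition start58 : seq (seq nat) := [:: [:: 0], [:: 1] & nseq 56 (iota 0 4)].

Lemma refutes_certificate58 : refutes (squares 7) certificate58 start58.
Proof. vm_cast_no_check (erefl true). Qed.

Lemma normalised_coloring_mono_58 (col : nat -> 'I_4) :
  col 1 = 0 :> nat -> col 2 = 1 :> nat -> mono_square_pair 4 58 col.
Proof.
move=> col1 col2; apply: (not_avoids_mono_square_pair (k := 7)); apply/negP.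
move/(avoidsP (squares_gt0 7)) => ok.
apply: (refutes_sound (squares_gt0 7) refutes_certificate58 ok).
case=> [|[|i]] iD; rewrite /nat_coloring; [by rewrite /= col1 | by rewrite /= col2 |].
have -> : nth [::] start58 i.+2 = iota 0 4 by rewrite [LHS]nth_nseq (_ : i < 56).
by rewrite mem_iota ltn_ord.
Qed.

Lemma every_coloring_mono_58 : every_coloring_mono 4 58.
Proof.
move=> col; have [eq12|neq12] := eqVneq (col 1) (col 2); first by exists 1, 2, 1.
have [p [p1 p2]] := @perm_map2 _ _ _ ord0 (Ordinal (isT : 1 < 4)) neq12 isT.
apply: (mono_square_pair_relabel (g := p) perm_inj).
by apply: normalised_coloring_mono_58; rewrite /= ?p1 ?p2.
Qed.

Definition palette57 :=
  [:: 0; 1; 2; 3; 1; 0; 1; 2; 0; 1; 3; 1; 2; 0; 1; 3; 1; 3; 0; 1; 3; 1; 3; 0; 2; 3; 2; 3; 0;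
      2; 3; 2; 3; 1; 2; 0; 2; 3; 1; 2; 0; 2; 0; 1; 3; 0; 2; 0; 1; 3; 0; 1; 0; 2; 3; 0; 1].

Definition coloring57 (i : nat) : 'I_4 := inZp (nth 0 palette57 i.-1).

Lemma no_mono_square_pair_57 : ~ mono_square_pair 4 57 coloring57.
Proof.
apply: (avoids_no_mono_square_pair (k := 7)) => //.
by apply/(avoidsP (squares_gt0 7)); vm_compute.
Qed.

Theorem mainTheorem5 :
  is_van_der_square_number 4 58 /\
  (exists col : nat -> 'I_4, ~ @mono_square_pair 4 57 col) /\
  every_coloring_mono 4 58.
Proof.
split; last by split; [exists coloring57; exact: no_mono_square_pair_57 |
                       exact: every_coloring_mono_58].
split=> // [|m m_gt0 m_lt58 every_m]; first exact: every_coloring_mono_58.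
apply: no_mono_square_pair_57.
exact: (mono_square_pair_widen _ (every_m coloring57)).
Qed.
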